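(* Let $k\geq 2$ be an integer. If $G$ is a $k$-leaf power, then $\mathrm{box}(G)\leq k-1$.
   Context: A finite graph $G$ is a $k$-leaf power if there is a tree $T$ and a bijection between $V(G)$ and the set of leaves of $T$ such that two vertices of $G$ are adjacent iff the corresponding leaves are at distance at most $k$ in $T$. The boxicity $\mathrm{box}(G)$ is the minimum integer $t$ such that $G$ is the intersection graph of axis-parallel $t$-dimensional boxes (Cartesian products of $t$ closed real intervals), i.e. there is a map $f$ from $V(G)$ to such boxes with $(u,v)\in E(G)\iff f(u)\cap f(v)\neq\emptyset$ for distinct $u,v$. *)

From mathcomp Require Import all_boot.
From Stdlib Require Import Reals.
Set Implicit Arguments. Unset Strict Implicit. Unset Printing Implicit Defensive.

Definition simple_graph (V : finType) (e : rel V) : Prop :=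
  symmetric e /\ irreflexive e.

Definition is_tree (V : finType) (t : rel V) : Prop :=
  simple_graph t /\ 0 < #|V| /\
  (forall x y : V, connect t x y) /\
  (forall c : seq V, ucycle t c -> size c < 3).

(* Leaves of a tree: vertices of degree at most 1 (for trees on >= 2
   vertices these are exactly the degree-1 vertices). *)
Definition is_leaf (V : finType) (t : rel V) (v : V) : Prop :=
  #|[pred w | t v w]| <= 1.

Definition dist_le (V : finType) (t : rel V) (k : nat) (x y : V) : Prop :=
  exists p : seq V, [/\ path t x p, last x p = y & size p <= k].

Definition leaf_power (k : nat) (T : finType) (g : rel T) : Prop :=
  exists (V : finType) (t : rel V) (f : T -> V),
    [/\ is_tree t,
        injective f,
        (forall v : V, is_leaf t v <-> exists x : T, f x = v) &
        (forall x y : T, x <> y -> (g x y <-> dist_le t k (f x) (f y)))].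

Definition box_rep (T : finType) (g : rel T) (d : nat) : Prop :=
  exists b : T -> 'I_d -> (R * R),
    (forall x i, (fst (b x i) <= snd (b x i))%R) /\
    (forall x y : T, x <> y ->
       (g x y <-> exists p : 'I_d -> R, forall i,
          (fst (b x i) <= p i <= snd (b x i))%R /\
          (fst (b y i) <= p i <= snd (b y i))%R)).

Definition boxicity_le (T : finType) (g : rel T) (t : nat) : Prop :=
  exists d, d <= t /\ box_rep g d.

(* Root the tree T at a vertex r of degree at least 2 (if there is none, G is complete) and
   order the children of every vertex so that leaves come first; a vertex is then encoded by
   the word of keys along its path from r, and lexicographic order on these words is the
   depth-first order of T.  For a leaf x and i < k - 1 take the lexicographic interval from
   the word of the (i+1)-th ancestor of x to the end of the subtree of its (k-2-i)-th ancestor.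
   If x and y branch off at depths a and b below their meeting point (x in the earlier
   branch), all k - 1 pairs of intervals meet iff a + b <= k, i.e. iff x and y are adjacent
   in G.  Replacing each word by its rank among the finitely many endpoints gives real boxes
   in dimension k - 1. *)

From mathcomp Require Import all_boot all_order zify.
From Stdlib Require Import Reals Lra.
Set Implicit Arguments. Unset Strict Implicit. Unset Printing Implicit Defensive.
Import Order.TTheory.

Section Rank.
Variables (disp : Order.disp_t) (O : orderType disp) (E : seq O).

Definition rank (s : O) := count (< s)%O E.

Lemma rank_le s1 s2 : (s1 <= s2)%O -> rank s1 <= rank s2.
Proof. by move=> le12; apply: sub_count => e /= /lt_le_trans; apply. Qed.

Lemma rank_le_mem s e : e \in E -> (s <= e)%O = (rank s <= rank e).
Proof.
move=> eE; apply/idP/idP => [/rank_le//|]; apply: contraTT; rewrite -ltNge => lt_es.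
rewrite -ltnNge /rank; elim: E eE => //= e' E' IH; rewrite inE.
case/orP=> [/eqP<-|/IH]; last first.
  have : (e' < e -> e' < s)%O by move=> /lt_trans; apply.
  by case: (e' < e)%O; case: (e' < s)%O => //= h; try lia; have := h isT.
rewrite ltxx lt_es add1n ltnS; apply: sub_count => x /= /lt_trans; exact.
Qed.

End Rank.

Lemma boxes_meet_iff d (lx rx ly ry : 'I_d -> R) :
  (forall i, lx i <= rx i)%R -> (forall i, ly i <= ry i)%R ->
  (exists p : 'I_d -> R, forall i, (lx i <= p i <= rx i /\ ly i <= p i <= ry i)%R) <->
  (forall i, lx i <= ry i /\ ly i <= rx i)%R.
Proof.
move=> hx hy; split=> [[p hp] i|h]; first by have := hp i; lra.
exists (fun i => Rmax (lx i) (ly i)) => i.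
have := h i; have := hx i; have := hy i.
have := Rmax_l (lx i) (ly i); have := Rmax_r (lx i) (ly i); have := Rmax_lub (lx i) (ly i).
move=> lub *; split; split=> //; apply: lub; lra.
Qed.

Lemma box_rep_of_intervals (T : finType) (g : rel T) d (disp : Order.disp_t)
    (O : orderType disp) (lo hi : T -> 'I_d -> O) :
  (forall x i, (lo x i <= hi x i)%O) ->
  (forall x y, x <> y -> g x y <-> forall i, (lo x i <= hi y i)%O /\ (lo y i <= hi x i)%O) ->
  box_rep g d.
Proof.
move=> lohi gE.
pose E := [seq lo z.1 z.2 | z <- enum {: T * 'I_d}] ++
          [seq hi z.1 z.2 | z <- enum {: T * 'I_d}].
have loE x i : lo x i \in E.
  by rewrite mem_cat (map_f (fun z => lo z.1 z.2) (mem_enum _ (x, i))).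
have hiE x i : hi x i \in E.
  by rewrite mem_cat (map_f (fun z => hi z.1 z.2) (mem_enum _ (x, i))) orbT.
pose c s := INR (rank E s).
have c_le s e : e \in E -> (s <= e)%O <-> (c s <= c e)%R.
  move=> eE; rewrite (rank_le_mem s eE).
  by split=> [/ssrnat.leP/le_INR|/INR_le/ssrnat.leP].
exists (fun x i => (c (lo x i), c (hi x i))).
split=> [x i|x y xy]; first exact/c_le.
rewrite gE // boxes_meet_iff => [|i|i] /=; try exact/c_le.
by split=> h i; have [] := h i; rewrite -!c_le.
Qed.

Lemma box_rep_complete (T : finType) (g : rel T) d :
  (forall x y, x <> y -> g x y) -> box_rep g d.
Proof.
move=> gT; exists (fun _ _ => (0%R, 0%R)); split=> [x i|x y xy]; first exact: Rle_refl.
by split=> _; [exists (fun _ => 0%R) => i; split; split; apply: Rle_refl | exact: gT].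
Qed.

Local Notation word := (seqlexi nat).

(* The word of the [h]-th ancestor, clamped at the root (the one-letter prefix). *)
Definition ancestor_word (h : nat) (w : seq nat) := take (maxn 1 (size w - h)) w.

Section SentinelOrder.
Variables (N k : nat).

(* [N] exceeds every letter, so [w ++ [:: N]] is above all words extending [w]: coordinate [i]
   of a leaf runs from its [i.+1]-th ancestor to the end of the subtree of its [(k - i.+2)]-th
   ancestor. *)
Definition lo_word (w : seq nat) (i : 'I_(k - 1)) : word := ancestor_word i.+1 w.
Definition hi_word (w : seq nat) (i : 'I_(k - 1)) : word := ancestor_word (k - i.+2) w ++ [:: N].

Lemma take_lexi_sentinel (w : seq nat) n m : all (fun z => z < N) w ->
  (take n w <= take m w ++ [:: N] :> word)%O.
Proof.
elim: w n m => [|c w IH] [|n] [|m] //=.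
  by case/andP=> cN _; rewrite neqhead_lexiE // ltn_eqF.
by case/andP=> _ /IH; rewrite eqhead_lexiE.
Qed.

Lemma lo_hi_word w i : all (fun z => z < N) w -> (lo_word w i <= hi_word w i)%O.
Proof. exact: take_lexi_sentinel. Qed.

Variables (p s u : seq nat) (a b : nat).
Hypothesis lt_ab : a < b.
Hypotheses (sN : all (fun z => z < N) (p ++ a :: s)) (uN : all (fun z => z < N) (p ++ b :: u)).

Lemma take_lexi_sentinel_lt n m :
  (take n (p ++ a :: s) <= take m (p ++ b :: u) ++ [:: N] :> word)%O.
Proof.
elim: p sN n m => [|c q IH] /= /andP[cN qN] [|n] [|m] //=.
all: rewrite ?eqhead_lexiE ?neqhead_lexiE ?ltn_eqF //; exact: IH.
Qed.

Lemma take_lexi_sentinel_gt n m :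
  (take n (p ++ b :: u) <= take m (p ++ a :: s) ++ [:: N] :> word)%O =
  (m <= size p) || (n <= size p).
Proof.
elim: p uN n m => [|c q IH] /= /andP[cN qN] [|n] [|m] //=.
all: rewrite ?eqhead_lexiE ?neqhead_lexiE ?(gtn_eqF lt_ab) ?ltn_eqF ?IH ?orbT //.
by apply/negbTE; rewrite -leqNgt ltnW.
Qed.

Lemma sentinel_intervals_meet_iff : 2 <= k -> 0 < size p ->
  (forall i, (lo_word (p ++ a :: s) i <= hi_word (p ++ b :: u) i)%O /\
             (lo_word (p ++ b :: u) i <= hi_word (p ++ a :: s) i)%O) <->
  size u = 0 \/ size s + size u + 2 <= k.
Proof.
move=> k2 p0.
have meet_i i : (lo_word (p ++ b :: u) i <= hi_word (p ++ a :: s) i)%O <->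
                size s + i.+3 <= k \/ size u <= i.
  rewrite /lo_word /hi_word /ancestor_word take_lexi_sentinel_gt !size_cat /=.
  have := ltn_ord i; split=> [/orP|]; lia.
split=> [h|hk i]; last by split; [exact: take_lexi_sentinel_lt | apply/meet_i; lia].
case: (posnP (size u)) => [|u0]; [by left | right; rewrite leqNgt; apply/negP => hk].
have lt_i : minn (k - 2) (size u - 1) < k - 1 by lia.
by have [_ /meet_i] := h (Ordinal lt_i); rewrite /=; lia.
Qed.

End SentinelOrder.

Lemma seq_prefix_or_diverge (T : eqType) (s1 s2 : seq T) :
  [\/ exists w, s2 = s1 ++ w, exists w, s1 = s2 ++ w |
      exists p a b s s', [/\ s1 = p ++ a :: s, s2 = p ++ b :: s' & a != b]].
Proof.
elim: s1 s2 => [|x s1 IH] [|y s2].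
- by constructor 1; exists [::].
- by constructor 1; exists (y :: s2).
- by constructor 2; exists (x :: s1).
case: (x =P y) => [<-|/eqP ne]; last by constructor 3; exists [::], x, y, s1, s2.
case: (IH s2) => [[w ->]|[w ->]|[p [a [b [s [s' [-> -> ab]]]]]]].
- by constructor 1; exists w.
- by constructor 2; exists w.
- by constructor 3; exists (x :: p), a, b, s, s'.
Qed.

Fixpoint lcp (T : eqType) (s1 s2 : seq T) : nat :=
  match s1, s2 with
  | x :: s1', y :: s2' => if x == y then (lcp s1' s2').+1 else 0
  | _, _ => 0
  end.

Lemma lcp_rcons (T : eqType) (s q : seq T) c :
  lcp s q <= lcp s (rcons q c) <= (lcp s q).+1.
Proof.
elim: s q => [|x s IH] [|y q] //=; first by case: ifP => //; case: s {IH}.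
by case: ifP => // _; rewrite !ltnS.
Qed.

Lemma lcp_refl (T : eqType) (s : seq T) : lcp s s = size s.
Proof. by elim: s => //= x s ->; rewrite eqxx. Qed.

Lemma lcp_diverge (T : eqType) (p : seq T) a b s s' :
  a != b -> lcp (p ++ a :: s) (p ++ b :: s') = size p.
Proof. by move=> ab; elim: p => /= [|x p ->]; rewrite ?eqxx // (negbTE ab). Qed.

Section DistLe.
Variables (V : finType) (t : rel V).

Lemma dist_le_mono n m x y : n <= m -> dist_le t n x y -> dist_le t m x y.
Proof. by move=> nm [p [pp lp sp]]; exists p; split => //; apply: leq_trans sp nm. Qed.

Lemma dist_le_trans n m x y z :
  dist_le t n x y -> dist_le t m y z -> dist_le t (n + m) x z.
Proof.
case=> p [pp lp sp] [q [pq lq sq]]; exists (p ++ q); split.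
- by rewrite cat_path pp lp pq.
- by rewrite last_cat lp.
- by rewrite size_cat leq_add.
Qed.

Lemma dist_le_sym n x y : symmetric t -> dist_le t n x y -> dist_le t n y x.
Proof.
move=> tsym [p [pp lp sp]]; exists (rev (belast x p)); split.
- by rewrite -lp rev_path (@eq_path _ _ t) // => a b /=; rewrite tsym.
- by case: p {pp sp} lp => [|a p'] //= <-; rewrite rev_cons last_rcons.
- by rewrite size_rev size_belast.
Qed.

End DistLe.

Section RootPath.
Variables (V : finType) (t : rel V) (r : V).
Hypotheses (tsym : symmetric t) (tirr : irreflexive t) (tcon : forall v, connect t r v).

Fixpoint ball n : {set V} :=
  if n is n'.+1 then ball n' :|: [set v | [exists w in ball n', t w v]] else [set r].

Lemma ball_path p : path t r p -> last r p \in ball (size p).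
Proof.
elim/last_ind: p => [|q c IH]; first by rewrite /= inE.
rewrite rcons_path last_rcons size_rcons => /andP[/IH h e].
by rewrite /= !inE; apply/orP; right; apply/existsP; exists (last r q); rewrite h.
Qed.

Lemma exists_ball v : exists n, v \in ball n.
Proof. by have /connectP[p pp ->] := tcon v; exists (size p); exact: ball_path. Qed.

Definition depth v := ex_minn (exists_ball v).

Lemma depth_ball v : v \in ball (depth v).
Proof. by rewrite /depth; case: ex_minnP. Qed.

Lemma depth_min v n : v \in ball n -> depth v <= n.
Proof. by rewrite /depth; case: ex_minnP => m _ h /h. Qed.

Lemma exists_parent v : v != r -> exists w, t v w && (depth w < depth v).
Proof.
move=> vr; have := depth_ball v; case E: (depth v) => [|n].
  by rewrite /= inE (negbTE vr).
rewrite /= inE => /orP[/depth_min|]; first by rewrite E ltnn.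
rewrite inE => /existsP[w /andP[wn twv]]; exists w.
by rewrite tsym twv /= ltnS depth_min.
Qed.

Definition parent v :=
  if v == r then r else odflt r [pick w | t v w && (depth w < depth v)].

Lemma parentP v : v != r -> t v (parent v) && (depth (parent v) < depth v).
Proof.
move=> vr; rewrite /parent (negbTE vr); case: pickP => //= h.
by have [w] := exists_parent vr; rewrite h.
Qed.

Lemma parent_root : parent r = r.
Proof. by rewrite /parent eqxx. Qed.

Fixpoint root_path_rec n v : seq V :=
  if n is n'.+1 then (if v == r then [:: r] else rcons (root_path_rec n' (parent v)) v)
  else [:: v].

(* Enough fuel: depth drops along parents, so [depth v].+1 steps reach [r]. *)
Definition root_path v := root_path_rec (depth v).+1 v.

Lemma root_path_rec_stable n m v :
  depth v < n -> depth v < m -> root_path_rec n v = root_path_rec m v.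
Proof.
elim: n m v => [|n IH] [|m] v //= hn hm; case: ifP => // /negbT /parentP /andP[_ lt].
congr rcons; apply: IH; lia.
Qed.

Lemma root_path_root : root_path r = [:: r].
Proof. by rewrite /root_path /= eqxx. Qed.

Lemma root_path_parent v : v != r -> root_path v = rcons (root_path (parent v)) v.
Proof.
move=> vr; rewrite {1}/root_path /= (negbTE vr); congr rcons.
have /andP[_ lt] := parentP vr; apply: root_path_rec_stable => //; lia.
Qed.

Lemma parent_ind (Q : V -> Prop) :
  Q r -> (forall v, v != r -> Q (parent v) -> Q v) -> forall v, Q v.
Proof.
move=> Qr Qs v; elim: {v}(depth v) {-2}v (leqnn (depth v)) => [|n IH] v hv;
  case: (v =P r) => [->//|/eqP vr]; have /andP[_ lt] := parentP vr.
  by move: hv lt; rewrite leqn0 => /eqP->.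
by apply: Qs => //; apply: IH; lia.
Qed.

Lemma root_pathE v : exists q, root_path v = rcons q v.
Proof.
elim/parent_ind: v => [|v vr _]; first by exists [::]; rewrite root_path_root.
by exists (root_path (parent v)); rewrite root_path_parent.
Qed.

Lemma root_path_last v : last r (root_path v) = v.
Proof. by have [q ->] := root_pathE v; rewrite last_rcons. Qed.

Lemma root_path_inj : injective root_path.
Proof. by move=> u v /(congr1 (last r)); rewrite !root_path_last. Qed.

Lemma root_path_head v : exists s, root_path v = r :: s.
Proof.
elim/parent_ind: v => [|v vr [s Es]]; first by exists [::]; rewrite root_path_root.
by exists (rcons s v); rewrite (root_path_parent vr) Es.
Qed.

Lemma root_path_nil v : root_path v != [::].
Proof. by have [s ->] := root_path_head v. Qed.

Lemma root_path_path v : path t r (behead (root_path v)).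
Proof.
elim/parent_ind: v => [|v vr]; first by rewrite root_path_root.
have [s Es] := root_path_head (parent v).
rewrite (root_path_parent vr) Es /= => h; rewrite rcons_path h /=.
have : last r s = last r (r :: s) by [].
rewrite -Es root_path_last => ->; rewrite tsym; by case/andP: (parentP vr).
Qed.

Lemma root_path_prefix v q c w : root_path v = q ++ c :: w -> root_path c = rcons q c.
Proof.
elim/parent_ind: v q c w => [|v vr IH] q c w.
  rewrite root_path_root; case: q => [|a q] /=; first by case=> <- _; rewrite root_path_root.
  by case=> _; case: q.
rewrite (root_path_parent vr); case/lastP: w => [|w d].
  by rewrite cats1 => /rcons_inj[<- <-]; rewrite (root_path_parent vr).
by rewrite -rcons_cons -rcons_cat => /rcons_inj[/IH].
Qed.

Lemma root_path_uniq v : uniq (root_path v).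
Proof.
elim/parent_ind: v => [|v vr IH]; first by rewrite root_path_root.
rewrite root_path_parent // rcons_uniq IH andbT; apply/negP => vin.
case/splitPr E: {1}(root_path (parent v)) / vin => [q w].
have := root_path_prefix E; rewrite (root_path_parent vr) E => /(congr1 size).
by rewrite !size_rcons size_cat /=; lia.
Qed.

Lemma root_path_suffix v q w : root_path v = q ++ w -> q != [::] -> path t (last r q) w.
Proof.
move=> E qn; have [s Es] := root_path_head v; have := root_path_path v; rewrite Es /=.
case: q E qn => [|a q] //; rewrite Es /= => -[<- Es'] _ h.
by move: h; rewrite Es' cat_path => /andP[].
Qed.

Lemma dist_le_root_path_suffix v q w :
  root_path v = q ++ w -> q != [::] -> dist_le t (size w) (last r q) v.
Proof.
move=> E qn; exists w; split => //; first exact: root_path_suffix E qn.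
by rewrite -(root_path_last v) E last_cat.
Qed.

Lemma root_path_diverge_nil u v p a b s s' :
  root_path u = p ++ a :: s -> root_path v = p ++ b :: s' -> a != b -> p != [::].
Proof.
move=> Eu Ev; apply: contraNneq => p0; move: Eu Ev; rewrite p0.
by have [x ->] := root_path_head u; have [y ->] := root_path_head v; case=> <- _ [<-].
Qed.

Lemma root_path_branches_disjoint u v p a b s s' :
  root_path u = p ++ a :: s -> root_path v = p ++ b :: s' -> a != b ->
  forall w, w \in a :: s -> w \notin b :: s'.
Proof.
move=> Eu Ev ab w wu; apply/negP => wv.
case/splitPr E1: {1}(a :: s) / wu => [q1 q2]; case/splitPr E3: {1}(b :: s') / wv => [q3 q4].
have /root_path_prefix Eu' : root_path u = (p ++ q1) ++ w :: q2 by rewrite Eu E1 catA.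
have /root_path_prefix Ev' : root_path v = (p ++ q3) ++ w :: q4 by rewrite Ev E3 catA.
move: Ev'; rewrite Eu' => /rcons_inj[/eqP]; rewrite eqseq_cat // eqxx => /eqP q13.
move: E3; rewrite -q13; case: q1 E1 {q13 Eu'} => [|x q1] [ea _] [eb _].
  all: by rewrite ea eb eqxx in ab.
Qed.

Hypothesis tacyc : forall c : seq V, ucycle t c -> size c < 3.

Lemma root_path_edge_ancestor u v w : root_path v = root_path u ++ w -> t u v -> u = parent v.
Proof.
move=> E tuv; case: w E => [|c [|c' w']] E.
- by move: E; rewrite cats0 => /root_path_inj eq; move: tuv; rewrite eq tirr.
- have cv : c = v by have := root_path_last v; rewrite E last_cat.
  subst c; case: (v =P r) => [vr|/eqP vr].
    move: E; rewrite vr root_path_root; have [s ->] := root_path_head u.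
    by case=> /(congr1 size); rewrite size_cat /=; lia.
  by move: E; rewrite (root_path_parent vr) cats1 => /rcons_inj[/root_path_inj].
- (* [v] lies at least two levels below its neighbour [u]: the tree path and the edge close a
     cycle. *)
  exfalso; suff /tacyc : ucycle t (u :: c :: c' :: w') by [].
  have := root_path_suffix E (root_path_nil u); rewrite root_path_last.
  have : last u (c :: c' :: w') = v by rewrite -(root_path_last v) E last_cat root_path_last.
  move=> /= lv /and3P[tuc tcc' pw]; rewrite /ucycle /= rcons_path tuc tcc' pw lv tsym tuv /=.
  have := root_path_uniq v; rewrite E cat_uniq => /and3P[_ /hasPn hn /= ->].
  rewrite andbT; apply/negP => /hn; have [q ->] := root_pathE u; by rewrite mem_rcons mem_head.
Qed.

Lemma root_path_edge_diverge u v p a b s s' :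
  root_path u = p ++ a :: s -> root_path v = p ++ b :: s' -> a != b -> ~~ t u v.
Proof.
move=> Eu Ev ab; apply/negP => tuv.
have pn := root_path_diverge_nil Eu Ev ab.
have disj := root_path_branches_disjoint Eu Ev ab.
have zp : last r p \in p.
  by case/lastP: p pn {Eu Ev disj} => // q x _; rewrite last_rcons mem_rcons mem_head.
set z := last r p in zp *.
have pu : path t z (a :: s) := root_path_suffix Eu pn.
have pv : path t z (b :: s') := root_path_suffix Ev pn.
have lu : last z (a :: s) = u by rewrite -(root_path_last u) Eu last_cat.
have lv : last z (b :: s') = v by rewrite -(root_path_last v) Ev last_cat.
have := root_path_uniq u; rewrite Eu cat_uniq => /and3P[_ /hasPn zu uas].
have := root_path_uniq v; rewrite Ev cat_uniq => /and3P[_ /hasPn zv ubs].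
(* The branches below the branch point [z], joined by the edge [u v], close a cycle. *)
suff /tacyc : ucycle t (z :: (a :: s) ++ rev (b :: s')).
  by rewrite /= size_cat size_rev /=; lia.
apply/andP; split.
  rewrite [cycle _ _]/= rcons_cat cat_path; move: pu => /= /andP[-> ->] /=.
  rewrite (lu : last a s = u).
  rewrite -rev_cons (lastI z (b :: s')) rev_rcons lv /= tuv /= -{1}lv rev_path.
  by rewrite (@eq_path _ _ t) // => x y /=; rewrite tsym.
rewrite cons_uniq mem_cat mem_rev negb_or cat_uniq uas rev_uniq ubs /= andbT.
rewrite (contraL (zu z)) ?(contraL (zv z)) //=.
by apply/hasPn => w; rewrite mem_rev => wb; apply/negP => /disj; rewrite wb.
Qed.

Lemma root_path_child u v : t u v -> u = parent v -> root_path v = rcons (root_path u) v.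
Proof.
move=> tuv uv; case: (v =P r) => [vr|/eqP vr]; last by rewrite (root_path_parent vr) -uv.
by move: tuv; rewrite uv vr parent_root tirr.
Qed.

Lemma root_path_edge u v :
  t u v -> root_path v = rcons (root_path u) v \/ root_path u = rcons (root_path v) u.
Proof.
move=> tuv; have tvu : t v u by rewrite tsym.
case: (seq_prefix_or_diverge (root_path u) (root_path v)) => [[w E]|[w E]|].
- by left; apply/root_path_child/(root_path_edge_ancestor E).
- by right; apply/root_path_child/(root_path_edge_ancestor E).
- case=> p [a [b [s [s' [Eu Ev ab]]]]].
  by move: tuv; rewrite (negbTE (root_path_edge_diverge Eu Ev ab)).
Qed.

Lemma size_walk_ge x p : path t x p ->
  size (root_path x) + size (root_path (last x p)) <=
    2 * lcp (root_path x) (root_path (last x p)) + size p.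
Proof.
elim/last_ind: p => [|q c IH]; first by rewrite lcp_refl addn0 mul2n addnn.
rewrite rcons_path last_rcons size_rcons => /andP[/IH le_q e].
case: (root_path_edge e) => E.
  have /andP[+ _] := lcp_rcons (root_path x) (root_path (last x q)) c.
  by rewrite -E (congr1 size E) size_rcons; lia.
have /andP[_ +] := lcp_rcons (root_path x) (root_path c) (last x q).
by rewrite -E; move: le_q; rewrite (congr1 size E) size_rcons; lia.
Qed.

Lemma dist_le_diverge n x y p a b s s' :
  root_path x = p ++ a :: s -> root_path y = p ++ b :: s' -> a != b ->
  dist_le t n x y <-> size s + size s' + 2 <= n.
Proof.
move=> Ex Ey ab; have pn := root_path_diverge_nil Ex Ey ab; split.
  case=> q [pq lq sq]; have := size_walk_ge pq.
  by rewrite lq Ex Ey (lcp_diverge _ _ _ ab) !size_cat /=; lia.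
move=> le_n; apply: dist_le_mono le_n _; rewrite -addnA addn2 -addSnnS.
apply: dist_le_trans (dist_le_root_path_suffix Ey pn).
exact/dist_le_sym/(dist_le_root_path_suffix Ex pn).
Qed.

Lemma root_path_inner_not_leaf v q z c w :
  ~ is_leaf t r -> root_path v = q ++ z :: c :: w -> ~ is_leaf t z.
Proof.
rewrite /is_leaf => /negP; rewrite -ltnNge => r_inner E; apply/negP; rewrite -ltnNge.
have Ec : root_path c = rcons (q ++ [:: z]) c.
  by apply: (root_path_prefix (v := v) (w := w)); rewrite E -catA.
have Ez : root_path z = rcons q z := root_path_prefix E.
have cr : c != r.
  apply/eqP => cr; move: Ec; rewrite cr root_path_root => /(congr1 size).
  by rewrite size_rcons size_cat /=; lia.
have pc : parent c = z.
  by apply: root_path_inj; move: Ec; rewrite (root_path_parent cr) Ez cats1 => /rcons_inj[].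
have tzc : t z c by rewrite tsym -pc; case/andP: (parentP cr).
case: (z =P r) => [->//|/eqP zr]; apply/card_gt1P; exists c, (parent z); split => //.
  by rewrite inE; case/andP: (parentP zr).
apply/eqP => cpz; move: Ec; rewrite cpz (root_path_parent zr) in Ez * => /(congr1 size).
by move/(congr1 size): Ez; rewrite !size_rcons size_cat /=; lia.
Qed.

End RootPath.

Lemma adj_of_all_leaves (V : finType) (t : rel V) :
  symmetric t -> (forall x y, connect t x y) -> (forall v, is_leaf t v) ->
  forall u v, u != v -> t u v.
Proof.
move=> tsym tcon leaf u v; have /connectP[p pp ->] := tcon u v.
case: (shortenP pp) => [[|a [|b p']]] pp' up' _ /=; first by rewrite eqxx.
  by case/andP: pp'.
case/and3P: pp' => tua tab _; move: up' => /andP[]; rewrite !inE => /norP[_ /norP[ub _]] _ _.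
have := leaf a; rewrite /is_leaf leqNgt => /negP; case; apply/card_gt1P; exists u, b.
by rewrite !inE tsym tua tab.
Qed.

Lemma exists_key_pred_first (V : finType) (P : pred V) :
  exists kap : V -> nat, [/\ injective kap, forall v, kap v < 2 * #|V| &
    forall u v, kap u < kap v -> P v -> P u].
Proof.
pose rk v := index v (enum V).
have rk_lt v : rk v < #|V| by rewrite cardE index_mem mem_enum.
have rk_inj : injective rk by move=> u v; apply: (index_inj u); rewrite mem_enum.
(* Naming [#|V|] makes [lia] treat its differently elaborated occurrences as one atom. *)
set n := #|V| in rk_lt *.
exists (fun v => if P v then rk v else n + rk v); split.
- move=> u v /=; have := rk_lt u; have := rk_lt v.
  by case: (P u); case: (P v) => ltu ltv e; apply: rk_inj; lia.
- by move=> v; have := rk_lt v; case: (P v); lia.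
- by move=> u v; have := rk_lt v; case: (P u); case: (P v) => //; lia.
Qed.

Section LeafWords.
Variables (V : finType) (t : rel V) (r : V) (kap : V -> nat) (N k : nat).
Hypotheses (tsym : symmetric t) (tirr : irreflexive t) (tcon : forall v, connect t r v).
Hypotheses (tacyc : forall c : seq V, ucycle t c -> size c < 3) (r_inner : ~ is_leaf t r).
Hypotheses (kap_inj : injective kap) (kap_lt : forall v, kap v < N).
Hypothesis kap_leaf_first : forall u v, kap u < kap v -> is_leaf t v -> is_leaf t u.

Definition root_word v := map kap (root_path tcon v).

Lemma root_word_lt v : all (fun z => z < N) (root_word v).
Proof. by rewrite all_map; apply/allP => w _ /=. Qed.

Lemma root_path_leaf_prefix x y w : is_leaf t x ->
  root_path tcon y = root_path tcon x ++ w -> w = [::].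
Proof.
move=> xl; case: w => // c w E; have [q Eq] := root_pathE tsym tcon x.
by move: E; rewrite Eq cat_rcons => /(root_path_inner_not_leaf tsym r_inner).
Qed.

Lemma leaf_root_paths_diverge x y : is_leaf t x -> is_leaf t y -> x != y ->
  exists p a b s s',
    [/\ root_path tcon x = p ++ a :: s, root_path tcon y = p ++ b :: s' & a != b].
Proof.
move=> xl yl xy; case: (seq_prefix_or_diverge (root_path tcon x) (root_path tcon y)) => //.
- case=> w /[dup] + /(root_path_leaf_prefix xl) w0; rewrite w0 cats0 => /(root_path_inj tsym).
  by move/eqP; rewrite eq_sym (negbTE xy).
- case=> w /[dup] + /(root_path_leaf_prefix yl) w0; rewrite w0 cats0 => /(root_path_inj tsym).
  by move/eqP; rewrite (negbTE xy).
Qed.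

Lemma leaf_dist_le_iff_meet x y : 2 <= k -> is_leaf t x -> is_leaf t y -> x != y ->
  dist_le t k x y <->
  forall i : 'I_(k - 1), (lo_word (root_word x) i <= hi_word N (root_word y) i)%O /\
            (lo_word (root_word y) i <= hi_word N (root_word x) i)%O.
Proof.
move=> k2 xl yl xy; have [p [a [b [s [s' [Ex Ey ab]]]]]] := leaf_root_paths_diverge xl yl xy.
wlog lt_ab : x y a b s s' xl yl xy Ex Ey ab / kap a < kap b.
  move=> wlog_lt; case: (ltngtP (kap a) (kap b)) => [lt_ab|lt_ba|/kap_inj eq_ab].
  - exact: (wlog_lt x y a b s s' xl yl xy Ex Ey ab lt_ab).
  - rewrite eq_sym in xy; rewrite eq_sym in ab.
    have [h1 h2] := wlog_lt y x b a s' s yl xl xy Ey Ex ab lt_ba.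
    split=> [/(dist_le_sym tsym)/h1 h i|h]; first by have [] := h i.
    by apply/(dist_le_sym tsym)/h2 => i; have [] := h i.
  - by rewrite eq_ab eqxx in ab.
have p0 : 0 < size (map kap p).
  by rewrite size_map lt0n size_eq0 (root_path_diverge_nil tsym Ex Ey ab).
(* If [y] hangs directly below the branch point, so does [x], since leaves come first. *)
have s_nil : size s' = 0 -> size s = 0.
  move/size0nil => s'0; have yb : y = b by rewrite -(root_path_last tsym tcon y) Ey s'0 last_cat.
  case: s Ex => // c s Ex; case: (root_path_inner_not_leaf tsym r_inner Ex).
  by apply: kap_leaf_first lt_ab _; rewrite -yb.
have := root_word_lt x; have := root_word_lt y; rewrite /root_word Ex Ey !map_cat /= => uN sN.
apply: iff_trans (dist_le_diverge tsym tirr tacyc _ Ex Ey ab) _.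
apply: iff_trans _ (iff_sym (sentinel_intervals_meet_iff lt_ab sN uN k2 p0)).
by rewrite !size_map; split=> [|[s'0|//]]; [right | have := s_nil s'0; lia].
Qed.

End LeafWords.

Theorem corollary1 (k : nat) (T : finType) (g : rel T) :
  2 <= k -> simple_graph g -> leaf_power k g -> boxicity_le g (k - 1).
Proof.
(* A box representation only constrains distinct vertices. *)
move=> k2 _ [V [t [f [[[tsym tirr] [_ [tcon tacyc]]] finj fleaf gdist]]]].
have f_leaf x : is_leaf t (f x) by apply/fleaf; exists x.
have f_neq x y : x <> y -> f x != f y by move=> xy; apply/eqP => /finj.
exists (k - 1); split => //.
have [r r_inner|all_leaves] := pickP [pred v | ~~ (#|[pred w | t v w]| <= 1)]; last first.
  apply: box_rep_complete => x y xy; apply/gdist => //; exists [:: f y]; split => //=; last lia.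
  by rewrite andbT; apply: adj_of_all_leaves (f_neq x y xy) => // v; apply/negbFE/all_leaves.
have [kap [kap_inj kap_lt kap_leaf_first]] :=
  exists_key_pred_first [pred v | #|[pred w | t v w]| <= 1].
have meet := leaf_dist_le_iff_meet tsym tirr (tcon r) tacyc (negP r_inner)
  kap_inj kap_lt kap_leaf_first k2.
pose word x := root_word kap (tcon r) (f x).
apply: (@box_rep_of_intervals _ _ _ _ _
  (fun x => lo_word (word x)) (fun x => hi_word (2 * #|V|) (word x))).
  by move=> x i; apply/lo_hi_word/root_word_lt.
by move=> x y xy; rewrite gdist //; exact: meet (f_leaf x) (f_leaf y) (f_neq x y xy).
Qed.
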